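(* Let $\mathcal U=\{\mathbf u\in\mathbb R^n:\mathbf u^L\le\mathbf u\le\mathbf u^U\}$ with $0\le u^L_i<u^U_i<\infty$ for all $i$, and let $\widehat{\mathbf u}^j\in\mathcal U$. Given $p\ge1$, $\rho\ge0$ and $\mathbf s\in\mathcal S$, let $\omega_j(\rho,\mathbf s)=\sup_{\mathbf u\in\mathcal U}\{f(\mathbf s,\mathbf u)-\rho\|\mathbf u-\widehat{\mathbf u}^j\|_p^p\}$. Then $$\omega_j(\rho,\mathbf s)=\max_{\mathbf t}\ \sum_{k=1}^n\sum_{\ell=k}^{n+1}\Big(\sum_{i=k}^{\min\{\ell,n\}}z_{i\ell j}\Big)t_{k\ell}\quad\text{s.t.}\quad\sum_{k=1}^i\sum_{\ell=i}^{n+1}t_{k\ell}=1\ \ \forall i\in[n],\quad t_{k\ell}\ge0\ \ \forall k\in[n],\ \ell\in[k,n+1]_{\mathbb Z},$$ where, for $i\in[n]$ and $\ell\in[i,n+1]_{\mathbb Z}$, $z_{i\ell j}=-s_i\pi_{i\ell}+\sup_{u^L_i\le u_i\le u^U_i}\{\pi_{i\ell}u_i-\rho|u_i-\widehat u^j_i|^p\}$, with $\pi_{i\ell}=-d_\ell+\sum_{q=i+1}^\ell c_q$ if $\ell\in[i,n]_{\mathbb Z}$ and $\pi_{i,n+1}=C+\sum_{q=i+1}^nc_q$.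
   Context: Notation: $[m]=\{1,\dots,m\}$, $[i,j]_{\mathbb Z}=\{i,\dots,j\}$. $n\ge1$, $T>0$, $\mathcal S=\{\mathbf s\in\mathbb R^n:\mathbf s\ge0,\sum_is_i\le T\}$; costs $\mathbf c,\mathbf d\in\mathbb R^n_+$, $C\ge0$ with $d_{i+1}-d_i\le c_{i+1}$ ($i\in[n-1]$). $f(\mathbf s,\mathbf u)$ is the optimal value of $\min_{\mathbf w\in\mathbb R^{n+1},\mathbf v\in\mathbb R^n}\sum_{i=1}^n(c_iw_i+d_iv_i)+Cw_{n+1}$ s.t. $w_i-v_{i-1}=u_{i-1}+w_{i-1}-s_{i-1}$ ($i\in[2,n+1]_{\mathbb Z}$), $\mathbf w\ge0,w_1=0,\mathbf v\ge0$. *)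

From HB Require Import structures.
From mathcomp Require Import all_boot all_order all_algebra.
From mathcomp Require Import all_classical all_reals exp.
Set Implicit Arguments. Unset Strict Implicit. Unset Printing Implicit Defensive.
Import Order.TTheory GRing.Theory Num.Theory.
Local Open Scope classical_set_scope.
Local Open Scope ring_scope.

(* Vectors of R^n are represented as functions nat -> R, using indices 1..n
   (resp. 1..n+1 for w); values at other indices are irrelevant. *)

Section Defs.
Variable R : realType.

Definition lp_feasible (n : nat) (s u w v : nat -> R) : Prop :=
  w 1%N = 0 /\
  (forall i, (1 <= i <= n.+1)%N -> 0 <= w i) /\
  (forall i, (1 <= i <= n)%N -> 0 <= v i) /\
  (forall i, (2 <= i <= n.+1)%N ->
     w i - v i.-1 = u i.-1 + w i.-1 - s i.-1).

Definition lp_obj (n : nat) (c d : nat -> R) (C : R) (w v : nat -> R) : R :=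
  \sum_(1 <= i < n.+1) (c i * w i + d i * v i) + C * w n.+1.

Definition f_val (n : nat) (c d : nat -> R) (C : R) (s u : nat -> R) : R :=
  inf [set r | exists w v, lp_feasible n s u w v /\ r = lp_obj n c d C w v].

Definition in_box (n : nat) (uL uU u : nat -> R) : Prop :=
  forall i, (1 <= i <= n)%N -> uL i <= u i <= uU i.

Definition pnorm_pow (n : nat) (p : R) (u uh : nat -> R) : R :=
  \sum_(1 <= i < n.+1) (`|u i - uh i| `^ p).

Definition omega (n : nat) (c d : nat -> R) (C : R) (uL uU uh : nat -> R)
  (p rho : R) (s : nat -> R) : R :=
  sup [set f_val n c d C s u - rho * pnorm_pow n p u uh | u in in_box n uL uU].

Definition pi_coef (n : nat) (c d : nat -> R) (C : R) (i l : nat) : R :=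
  if (l <= n)%N then - d l + \sum_(i.+1 <= q < l.+1) c q
  else C + \sum_(i.+1 <= q < n.+1) c q.

Definition z_coef (n : nat) (c d : nat -> R) (C : R) (uL uU uh : nat -> R)
  (p rho : R) (s : nat -> R) (i l : nat) : R :=
  - s i * pi_coef n c d C i l +
  sup [set pi_coef n c d C i l * x - rho * (`|x - uh i| `^ p)
      | x in [set x | uL i <= x <= uU i]].

Definition t_feasible (n : nat) (t : nat -> nat -> R) : Prop :=
  (forall i, (1 <= i <= n)%N ->
     \sum_(1 <= k < i.+1) \sum_(i <= l < n.+2) t k l = 1) /\
  (forall k l, (1 <= k <= n)%N -> (k <= l <= n.+1)%N -> 0 <= t k l).

Definition t_obj (n : nat) (z : nat -> nat -> R) (t : nat -> nat -> R) : R :=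
  \sum_(1 <= k < n.+1) \sum_(k <= l < n.+2)
     (\sum_(k <= i < (minn l n).+1) z i l) * t k l.

End Defs.

From HB Require Import structures.
From mathcomp Require Import all_boot all_order all_algebra.
From mathcomp Require Import all_classical all_reals exp.
From mathcomp Require Import zify ring lra.
Import Order.TTheory GRing.Theory Num.Theory.

Local Open Scope ring_scope.

(* A point of the t-program is a fractional cover of {1, ..., n} by blocks
   [k, min(l, n)] carrying a label l, and its objective adds up block weights;
   its integral optimum is a longest path, whose value [dp n z n] is computed by
   dynamic programming.  The potential [dp i - dp (i - 1)] bounds every
   feasible t by telescoping, and an optimal path is an integral t attaining it.
   For omega <= dp: at fixed u the inner LP is solved greedily (carry every
   surplus, cover every deficit); its runs between two resets form a cover whose
   block weights are pi_il (u_i - s_i), and subtracting the penalty item by item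
   turns these into z.  For omega >= dp: along an optimal path the labelled
   prices pi_(i, lab i) are dual feasible for every inner LP (they are averages
   of prices under a feasible plan), so by weak duality it suffices to pick each
   u_i almost maximising pi_(i, lab i) u_i - rho |u_i - uh_i|^p. *)

Section SumNat.
Variable V : nmodType.

Lemma sum_nat_triangle a b1 b2 (F : nat -> nat -> V) : (b1 <= b2)%N ->
  \sum_(a <= i < b1) \sum_(i <= j < b2) F i j =
  \sum_(a <= j < b2) \sum_(a <= i < minn j.+1 b1) F i j.
Proof.
move=> le_b12.
transitivity (\sum_(a <= i < b1) \sum_(a <= j < b2 | (i <= j)%N) F i j).
  apply: eq_big_nat => i /andP[le_ai _].
  by rewrite (big_nat_widenl _ a).
rewrite (exchange_big_dep_nat predT) //=; apply: eq_big_nat => j /andP[_ lt_jb2].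
rewrite [RHS](big_nat_widen _ _ b1) ?geq_minr //.
by rewrite big_nat_cond [RHS]big_nat_cond; apply: eq_bigl => i; rewrite leq_min ltnS; lia.
Qed.

Lemma sum_blocks_by_item n (h : nat -> nat -> nat -> V) :
  \sum_(1 <= k < n.+1) \sum_(k <= l < n.+2) \sum_(k <= i < (minn l n).+1) h k i l =
  \sum_(1 <= i < n.+1) \sum_(1 <= k < i.+1) \sum_(i <= l < n.+2) h k i l.
Proof.
transitivity (\sum_(1 <= k < n.+1) \sum_(k <= i < n.+1) \sum_(i <= l < n.+2) h k i l).
  by apply: eq_bigr => k _; rewrite sum_nat_triangle //; apply: eq_bigr => l _; rewrite minnSS.
rewrite sum_nat_triangle //; apply: eq_big_nat => i /andP[_ Hi].
by rewrite (minn_idPl Hi).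
Qed.

End SumNat.

Section SumNatNum.
Context {R : numDomainType}.

Lemma sum_nat_delta m N i0 (F : nat -> R) :
  \sum_(m <= i < N) (i == i0)%:R * F i = (m <= i0 < N)%:R * F i0.
Proof.
case: (boolP (m <= i0 < N)%N) => Hi0.
  rewrite (bigD1_seq i0) ?mem_index_iota ?iota_uniq //= eqxx mul1r big1 ?addr0 //.
  by move=> i /negbTE ->; rewrite mul0r.
rewrite mul0r big_nat_cond big1 // => i /andP[Hi _].
have /negbTE -> : i != i0 by apply: contraNneq Hi0 => <-.
by rewrite mul0r.
Qed.

Lemma sum_nat_indicator m N i0 :
  \sum_(m <= i < N) (i == i0)%:R = (m <= i0 < N)%:R :> R.
Proof.
have := sum_nat_delta m N i0 (fun=> 1); rewrite mulr1 => <-.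
by apply: eq_bigr => i _; rewrite mulr1.
Qed.

Lemma term_le_sum_nat m N i0 (F : nat -> R) :
  (forall i, (m <= i < N)%N -> 0 <= F i) -> (m <= i0 < N)%N ->
  F i0 <= \sum_(m <= i < N) F i.
Proof.
move=> F_ge0 Hi0.
rewrite (bigD1_seq i0) ?mem_index_iota ?iota_uniq //= lerDl big_seq_cond.
by apply: sumr_ge0 => i /andP[]; rewrite mem_index_iota => /F_ge0.
Qed.

End SumNatNum.
Arguments term_le_sum_nat {R m N i0 F}.

Lemma sumr_by_parts (V : comPzRingType) n (y w : nat -> V) : w 1%N = 0 ->
  \sum_(1 <= i < n.+1) y i * (w i.+1 - w i) =
  \sum_(1 <= i < n) (y i - y i.+1) * w i.+1 + y n * w n.+1.
Proof.
move=> w1; case: n => [|n]; first by rewrite !big_geq // w1 mulr0 addr0.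
under eq_bigr do rewrite mulrBr.
rewrite sumrB big_nat_recr //= [X in _ - X]big_nat_recl // w1 mulr0 add0r.
under [in RHS]eq_bigr do rewrite mulrBl.
rewrite sumrB; ring.
Qed.

Lemma max_sub_max_opp (R : realDomainType) (x : R) : Num.max x 0 - Num.max (- x) 0 = x.
Proof.
by rewrite !maxEle; case: ifP => ?; case: ifP => ?; lra.
Qed.

(** * Covers of an interval by labelled blocks *)

Section LongestPath.
Variables (R : realDomainType) (n : nat) (g : nat -> nat -> R).

(* [dp j] is the largest weight of a cover of {1, ..., j} by consecutive blocks
   [k, min(l, n)] with label l, obtained by recursion on the last block; only a
   block ending at n has two possible labels, n and n + 1.  The fuel [m] of
   [dp_iter] just ensures termination (see [dp_iter_stable]). *)
Definition block_weight k l : R := \sum_(k <= i < (minn l n).+1) g i l.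

Definition best_block_weight k j : R :=
  if j == n then Num.max (block_weight k n) (block_weight k n.+1)
  else block_weight k j.

Fixpoint dp_iter m j : R :=
  if m is m'.+1 then
    if j == 0%N then 0 else
    \big[Num.max/dp_iter m' 0 + best_block_weight 1 j]_(1 <= k < j.+1)
      (dp_iter m' k.-1 + best_block_weight k j)
  else 0.

Definition dp j := dp_iter j j.

Lemma dp_iterS m j : dp_iter m.+1 j =
  if j == 0%N then 0 else
  \big[Num.max/dp_iter m 0 + best_block_weight 1 j]_(1 <= k < j.+1)
    (dp_iter m k.-1 + best_block_weight k j).
Proof. by []. Qed.

Lemma dp_iter_stable m j : (j <= m)%N -> dp_iter m j = dp j.
Proof.
have iterS m' j' : (j' <= m')%N -> dp_iter m'.+1 j' = dp_iter m' j'.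
  elim: m' j' => [|m' IH] j' Hj; first by case: j' Hj.
  rewrite dp_iterS [dp_iter m'.+1 j']dp_iterS; case: (j' == 0%N) => //.
  by rewrite IH //; apply: eq_big_nat => k Hk; rewrite IH //; lia.
rewrite /dp; elim: m => [|m IH] Hj; first by case: j Hj.
by case: (eqVneq j m.+1) => [->//|Hne]; rewrite iterS ?IH //; lia.
Qed.

Lemma dp0 : dp 0 = 0. Proof. by []. Qed.

Lemma dpE j : (0 < j)%N ->
  dp j = \big[Num.max/dp 0 + best_block_weight 1 j]_(1 <= k < j.+1)
           (dp k.-1 + best_block_weight k j).
Proof.
case: j => [//|j] _; rewrite /dp /= dp_iter_stable //.
by apply: eq_big_nat => k Hk; rewrite dp_iter_stable //; lia.
Qed.

Lemma block_weight_le_best k l j : minn l n = j -> (l <= n.+1)%N ->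
  block_weight k l <= best_block_weight k j.
Proof.
have [] : block_weight k n <= Num.max (block_weight k n) (block_weight k n.+1) /\
          block_weight k n.+1 <= Num.max (block_weight k n) (block_weight k n.+1).
  by rewrite !le_max !lexx orbT.
rewrite /best_block_weight => ge_n ge_n1 Hj Hl.
case: eqP => [Ejn|Hjn]; last by have -> : l = j by lia.
by have /orP[/eqP->|/eqP->] : (l == n) || (l == n.+1) by lia.
Qed.

Lemma block_weight_le_dp k l j : (1 <= k <= j)%N -> minn l n = j -> (l <= n.+1)%N ->
  dp k.-1 + block_weight k l <= dp j.
Proof.
move=> Hk Hj Hl; rewrite [dp j]dpE; last lia.
apply: (@bigmax_sup_seq _ _ _ _ _ k) => //; first by rewrite mem_index_iota; lia.
by rewrite lerD2l block_weight_le_best.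
Qed.

Lemma dp_attained j : (1 <= j <= n)%N -> exists k l,
  [/\ (1 <= k <= j)%N, (l <= n.+1)%N, minn l n = j & dp j = dp k.-1 + block_weight k l].
Proof.
move=> Hj.
have [k Hk ->] : exists2 k, (1 <= k <= j)%N & dp j = dp k.-1 + best_block_weight k j.
  rewrite dpE; last lia.
  rewrite big_seq; apply: (big_ind (fun x => exists2 k, (1 <= k <= j)%N & x = _)).
  - by exists 1%N => //; lia.
  - by move=> x y [kx ? ->] [ky ? ->]; rewrite maxEle; case: ifP => _; [exists ky|exists kx].
  - by move=> k; rewrite mem_index_iota => Hk; exists k => //; lia.
rewrite /best_block_weight; case: eqP => [Ejn|Hjn].
  rewrite maxEle; case: ifP => _; [exists k, n.+1 | exists k, n]; split => //; lia.
by exists k, j; split => //; lia.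
Qed.

End LongestPath.
Arguments block_weight {R} n g k l.
Arguments dp {R} n g j.

Lemma dp_sub_le (R : realDomainType) n (g g' : nat -> nat -> R) (h : nat -> R) :
  (forall i l, (1 <= i <= n)%N -> (i <= l <= n.+1)%N -> g i l - h i <= g' i l) ->
  forall j, (j <= n)%N -> dp n g j - \sum_(1 <= i < j.+1) h i <= dp n g' j.
Proof.
move=> le_gg'; elim/ltn_ind => j IH Hj.
case: (posnP j) => [->|Hj0]; first by rewrite big_geq // !dp0 subr0.
have [k [l [Hk Hl Hm ->]]] := @dp_attained _ n g j ltac:(lia).
have prefix := IH k.-1 ltac:(lia) ltac:(lia).
rewrite prednK in prefix; last lia.
have block : block_weight n g k l - \sum_(k <= i < j.+1) h i <= block_weight n g' k l.
  by rewrite /block_weight Hm -sumrB; apply: ler_sum_nat => i Hi; apply: le_gg'; lia.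
have := @block_weight_le_dp _ n g' _ _ _ Hk Hm Hl.
rewrite (@big_cat_nat _ _ _ k 1 j.+1) /=; try lia.
lra.
Qed.

(** * Plans: feasible points of the t-program *)

Section Plans.
Variables (R : realType) (n : nat).
Implicit Types (t g : nat -> nat -> R).

Definition coverage t i := \sum_(1 <= k < i.+1) \sum_(i <= l < n.+2) t k l.

Definition plan_nonneg t :=
  forall k l, (1 <= k <= n)%N -> (k <= l <= n.+1)%N -> 0 <= t k l.

Lemma sum_scale_coverage t i (a : R) :
  \sum_(1 <= k < i.+1) \sum_(i <= l < n.+2) a * t k l = a * coverage t i.
Proof. by rewrite /coverage mulr_sumr; apply: eq_bigr => k _; rewrite mulr_sumr. Qed.

Lemma t_obj_by_item g t : t_obj n g t =
  \sum_(1 <= i < n.+1) \sum_(1 <= k < i.+1) \sum_(i <= l < n.+2) g i l * t k l.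
Proof.
rewrite /t_obj -sum_blocks_by_item.
by apply: eq_bigr => k _; apply: eq_bigr => l _; rewrite mulr_suml.
Qed.

Lemma t_obj_le_dp g t : t_feasible n t -> t_obj n g t <= dp n g n.
Proof.
case=> cov1 t_ge0.
pose y i := dp n g i - dp n g i.-1.
have sum_y a b : (a <= b)%N -> \sum_(a <= i < b) y i = dp n g b.-1 - dp n g a.-1.
  exact: (telescope_sumr (fun i => dp n g i.-1)).
apply: (@le_trans _ _ (t_obj n (fun i _ => y i) t)).
  apply: ler_sum_nat => k Hk; apply: ler_sum_nat => l Hl.
  apply: ler_wpM2r; first by apply: t_ge0; lia.
  rewrite sum_y /=; last lia.
  by rewrite lerBrDl; apply: (@block_weight_le_dp _ n g k l); lia.
rewrite t_obj_by_item (eq_big_nat _ _ (F2 := y)) => [|i Hi].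
  by rewrite sum_y // dp0 subr0.
by rewrite sum_scale_coverage /coverage cov1 ?mulr1.
Qed.

Lemma plan_entry_eq0 t i k l : plan_nonneg t -> (i <= n)%N -> coverage t i = 0 ->
  (1 <= k <= i)%N -> (i <= l <= n.+1)%N -> t k l = 0.
Proof.
move=> t_ge0 Hin cov0 Hk Hl; apply/eqP; rewrite eq_le t_ge0 ?andbT; try lia.
rewrite -cov0 /coverage.
have row_ge0 k' : (1 <= k' < i.+1)%N -> 0 <= \sum_(i <= l' < n.+2) t k' l'.
  by move=> Hk'; rewrite big_nat_cond sumr_ge0 // => l' /andP[Hl' _]; apply: t_ge0; lia.
have Hk' : (1 <= k < i.+1)%N by lia.
apply: le_trans (term_le_sum_nat row_ge0 Hk').
by apply: term_le_sum_nat => [l' Hl'|]; [apply: t_ge0|]; lia.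
Qed.

Definition unit_plan k0 l0 : nat -> nat -> R := fun k l => (k == k0)%:R * (l == l0)%:R.

Lemma coverage_add t1 t2 i :
  coverage (fun k l => t1 k l + t2 k l) i = coverage t1 i + coverage t2 i.
Proof. by rewrite /coverage -big_split; apply: eq_bigr => k _; rewrite -big_split. Qed.

Lemma t_obj_add g t1 t2 :
  t_obj n g (fun k l => t1 k l + t2 k l) = t_obj n g t1 + t_obj n g t2.
Proof.
rewrite /t_obj -big_split; apply: eq_bigr => k _; rewrite -big_split.
by apply: eq_bigr => l _; rewrite mulrDr.
Qed.

Lemma coverage_unit k0 l0 i :
  coverage (unit_plan k0 l0) i = ((1 <= k0 <= i) && (i <= l0 <= n.+1))%N%:R.
Proof.
rewrite /coverage /unit_plan.
under eq_bigr => k _ do rewrite -mulr_sumr sum_nat_indicator.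
by rewrite sum_nat_delta -natrM mulnb; congr (_%:R); lia.
Qed.

Lemma t_obj_unit g k0 l0 : (1 <= k0 <= n)%N -> (k0 <= l0 <= n.+1)%N ->
  t_obj n g (unit_plan k0 l0) = block_weight n g k0 l0.
Proof.
move=> Hk0 Hl0; rewrite /t_obj /unit_plan.
under eq_bigr => k _ do under eq_bigr => l _ do rewrite mulrCA [_ * (l == l0)%:R]mulrC.
under eq_bigr => k _ do rewrite -mulr_sumr sum_nat_delta.
rewrite sum_nat_delta.
have -> : (1 <= k0 < n.+1)%N by lia.
have -> : (k0 <= l0 < n.+2)%N by lia.
by rewrite !mul1r.
Qed.

Lemma dp_attained_by_plan g j : (j <= n)%N -> exists t (lab : nat -> nat),
  [/\ plan_nonneg t,
      forall i, (1 <= i <= n)%N -> coverage t i = (i <= j)%:R,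
      forall i k l, (1 <= i <= j)%N -> (1 <= k <= i)%N -> (i <= l <= n.+1)%N ->
        t k l != 0 -> l = lab i
    & t_obj n g t = dp n g j].
Proof.
elim/ltn_ind: j => j IH Hj.
case: (posnP j) => [->|Hj0].
  exists (fun _ _ => 0), (fun _ => 0%N); split => [k l _ _ //|i Hi||].
  - rewrite /coverage big1 => [|k _]; last by rewrite big1.
    by have -> : (i <= 0)%N = false by lia.
  - by move=> i k l Hi; lia.
  - by rewrite /t_obj big1 // => k _; rewrite big1 // => l _; rewrite mulr0.
have [k [l [Hk Hl Hm Edp]]] := @dp_attained _ n g j ltac:(lia).
have [t' [lab' [t'_ge0 cov' lab'P obj']]] := IH k.-1 ltac:(lia) ltac:(lia).
exists (fun k' l' => t' k' l' + unit_plan k l k' l'),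
       (fun i => if (i < k)%N then lab' i else l).
split.
- move=> k' l' Hk' Hl'; apply: addr_ge0; first exact: t'_ge0.
  by rewrite /unit_plan mulr_ge0 ?ler0n.
- move=> i Hi; rewrite coverage_add cov' // coverage_unit -natrD; congr (_%:R); lia.
- move=> i k' l' Hi Hk' Hl'; case: ifP => Hik.
    have /negbTE k'k : k' != k by lia.
    by rewrite /unit_plan k'k mul0r addr0; apply: lab'P; lia.
  have cov'0 : coverage t' i = 0.
    by rewrite cov'; [have -> : (i <= k.-1)%N = false by lia | lia].
  rewrite (@plan_entry_eq0 t' i k' l' t'_ge0 _ cov'0) ?add0r /unit_plan; try lia.
  by case: (eqVneq l' l) => // _; rewrite mulr0 eqxx.
- by rewrite t_obj_add obj' t_obj_unit ?Edp //; lia.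
Qed.

Lemma plan_sum_le t i (h1 h2 : nat -> R) : plan_nonneg t -> (i <= n)%N ->
  (forall l, (i <= l <= n.+1)%N -> h1 l <= h2 l) ->
  \sum_(1 <= k < i.+1) \sum_(i <= l < n.+2) h1 l * t k l <=
  \sum_(1 <= k < i.+1) \sum_(i <= l < n.+2) h2 l * t k l.
Proof.
move=> t_ge0 Hi le_h; apply: ler_sum_nat => k Hk; apply: ler_sum_nat => l Hl.
by rewrite ler_wpM2r ?le_h ?t_ge0 //; lia.
Qed.

Lemma sum_labelled_plan t i lab (h : nat -> R) : coverage t i = 1 ->
  (forall k l, (1 <= k <= i)%N -> (i <= l <= n.+1)%N -> t k l != 0 -> l = lab) ->
  \sum_(1 <= k < i.+1) \sum_(i <= l < n.+2) h l * t k l = h lab.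
Proof.
move=> cov1 labP; rewrite -[RHS]mulr1 -cov1 -sum_scale_coverage.
apply: eq_big_nat => k Hk; apply: eq_big_nat => l Hl.
by case: (eqVneq (t k l) 0) => [->|/labP ->]; rewrite ?mulr0 //; lia.
Qed.

End Plans.
Arguments coverage {R} n t i.
Arguments plan_nonneg {R} n t.
Arguments dp_attained_by_plan {R n} g [j].
Arguments sum_labelled_plan {R n t i lab h}.
Arguments t_obj_le_dp {R n g t}.



(** * The inner linear program and its dual *)

Section Prices.
Variables (R : realType) (n : nat) (C : R) (c d : nat -> R).
Hypothesis n_ge1 : (1 <= n)%N.
Hypothesis cd_ge0 : forall i, (1 <= i <= n)%N -> 0 <= c i /\ 0 <= d i.
Hypothesis C_ge0 : 0 <= C.
Hypothesis d_step : forall i, (1 <= i < n)%N -> d i.+1 - d i <= c i.+1.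

Local Notation pi := (pi_coef n c d C).

(* With [c (n + 1) := C] the terminal cost [C * w (n + 1)] of [lp_obj] becomes
   one more holding cost. *)
Definition c_ext q := if q == n.+1 then C else c q.

Lemma c_ext_last : c_ext n.+1 = C.
Proof. by rewrite /c_ext eqxx. Qed.

Lemma c_ext_le_n q : (q <= n)%N -> c_ext q = c q.
Proof. by move=> Hq; rewrite /c_ext ifN //; lia. Qed.

Lemma sum_c_ext a b : (b <= n.+1)%N -> \sum_(a <= q < b) c_ext q = \sum_(a <= q < b) c q.
Proof. by move=> Hb; apply: eq_big_nat => q Hq; rewrite c_ext_le_n //; lia. Qed.

Lemma pi_coef_le_n i l : (l <= n)%N -> pi i l = - d l + \sum_(i.+1 <= q < l.+1) c_ext q.
Proof. by move=> Hl; rewrite /pi_coef Hl sum_c_ext. Qed.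

Lemma pi_coef_last i : (i <= n)%N -> pi i n.+1 = \sum_(i.+1 <= q < n.+2) c_ext q.
Proof.
by move=> Hi; rewrite /pi_coef ltnn [RHS]big_nat_recr //= sum_c_ext // c_ext_last addrC.
Qed.

Lemma pi_coefS i l : (i < n)%N -> (i < l <= n.+1)%N -> pi i l = pi i.+1 l + c i.+1.
Proof.
move=> Hin Hl; rewrite /pi_coef; case: (l <= n)%N; rewrite big_ltn; try lia; lra.
Qed.

Lemma d_sub_le_sum_c i l : (1 <= i)%N -> (i <= l <= n)%N ->
  d l - d i <= \sum_(i.+1 <= q < l.+1) c q.
Proof.
move=> Hi Hl; rewrite -(telescope_sumr d) ?big_add1 //=; last lia.
by apply: ler_sum_nat => q Hq; apply: d_step; lia.
Qed.

Lemma pi_coef_ge i l : (1 <= i <= n)%N -> (i <= l <= n.+1)%N -> - d i <= pi i l.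
Proof.
move=> Hi Hl; rewrite /pi_coef; case: ifP => Hln.
  have := @d_sub_le_sum_c i l ltac:(lia) ltac:(lia); lra.
have [_ d_ge0] := cd_ge0 i Hi.
apply: (@le_trans _ _ 0); first by rewrite oppr_le0.
rewrite addr_ge0 // big_nat_cond sumr_ge0 // => q /andP[Hq _].
by case: (cd_ge0 q ltac:(lia)).
Qed.

Lemma pi_coef_le_C l : (n <= l <= n.+1)%N -> pi n l <= C.
Proof.
move=> Hl; rewrite /pi_coef; case: ifP => Hln.
  have -> : l = n by lia.
  have [_ d_ge0] := cd_ge0 n ltac:(lia).
  by rewrite big_geq // addr0 (le_trans _ C_ge0) // oppr_le0.
by rewrite big_geq // addr0.
Qed.

Definition dual_feasible (y : nat -> R) :=
  [/\ forall i, (1 <= i <= n)%N -> - d i <= y i,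
      forall i, (1 <= i < n)%N -> y i - y i.+1 <= c i.+1
    & y n <= C].

Lemma lp_obj_shift w v : w 1%N = 0 ->
  lp_obj n c d C w v = \sum_(1 <= i < n.+1) (c_ext i.+1 * w i.+1 + d i * v i).
Proof.
move=> w1; rewrite /lp_obj !big_split /= addrAC; congr (_ + _).
have -> : \sum_(1 <= i < n.+1) c_ext i.+1 * w i.+1 = \sum_(1 <= i < n.+2) c_ext i * w i.
  by rewrite [RHS]big_ltn // w1 mulr0 add0r big_add1.
rewrite [RHS]big_nat_recr //= c_ext_last; congr (_ + _).
by apply: eq_big_nat => i Hi; rewrite c_ext_le_n //; lia.
Qed.

Lemma lp_obj_ge_dual s u w v y : lp_feasible n s u w v -> dual_feasible y ->
  \sum_(1 <= i < n.+1) y i * (u i - s i) <= lp_obj n c d C w v.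
Proof.
case=> [w1 [w_ge0 [v_ge0 balance]]] [y_ge y_step y_le].
have -> : \sum_(1 <= i < n.+1) y i * (u i - s i) =
    \sum_(1 <= i < n.+1) y i * (w i.+1 - w i) - \sum_(1 <= i < n.+1) y i * v i.
  rewrite -sumrB; apply: eq_big_nat => i Hi.
  by rewrite -mulrBr; congr (_ * _); have := balance i.+1 ltac:(lia); rewrite /=; lra.
rewrite sumr_by_parts // lp_obj_shift // big_split /=.
rewrite (big_nat_recr n 1 (fun i => c_ext i.+1 * w i.+1)) //= c_ext_last.
have -> : \sum_(1 <= i < n) c_ext i.+1 * w i.+1 = \sum_(1 <= i < n) c i.+1 * w i.+1.
  by apply: eq_big_nat => i Hi; rewrite c_ext_le_n //; lia.
have w_step : \sum_(1 <= i < n) (y i - y i.+1) * w i.+1 <= \sum_(1 <= i < n) c i.+1 * w i.+1.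
  by apply: ler_sum_nat => i Hi; rewrite ler_wpM2r ?y_step ?w_ge0 //; lia.
have w_last : y n * w n.+1 <= C * w n.+1 by rewrite ler_wpM2r ?w_ge0 //; lia.
have v_sum : - \sum_(1 <= i < n.+1) y i * v i <= \sum_(1 <= i < n.+1) d i * v i.
  rewrite -sumrN; apply: ler_sum_nat => i Hi.
  rewrite -mulNr; apply: ler_wpM2r; first by apply: v_ge0; lia.
  by rewrite lerNl y_ge //; lia.
by rewrite lerD // lerD.
Qed.

Definition plan_price (t : nat -> nat -> R) i :=
  \sum_(1 <= k < i.+1) \sum_(i <= l < n.+2) pi i l * t k l.

Lemma plan_price_step t i : t_feasible n t -> (1 <= i < n)%N ->
  plan_price t i - plan_price t i.+1 <= c i.+1.
Proof.
case=> cov1 t_ge0 Hi.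
(* The blocks through i end at i, or pass on to i + 1; those through i + 1 pass
   from i or start at i + 1.  Both coverages are 1, so as much mass ends at i as
   starts at i + 1, and [d_step] pays for the exchange. *)
pose ending := \sum_(1 <= k < i.+1) t k i.
pose passing := \sum_(1 <= k < i.+1) \sum_(i.+1 <= l < n.+2) t k l.
pose starting := \sum_(i.+1 <= l < n.+2) t i.+1 l.
pose P := \sum_(1 <= k < i.+1) \sum_(i.+1 <= l < n.+2) pi i.+1 l * t k l.
pose Q := \sum_(i.+1 <= l < n.+2) pi i.+1 l * t i.+1 l.
have price_i : plan_price t i = - d i * ending + P + c i.+1 * passing.
  rewrite /plan_price /ending /P /passing !mulr_sumr -!big_split /=.
  apply: eq_big_nat => k Hk; rewrite big_ltn; last lia.
  have Hin : (i <= n)%N by lia.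
  rewrite pi_coef_le_n // (big_geq (leqnn i.+1)) addr0.
  rewrite mulr_sumr -addrA -big_split /=; congr (_ + _).
  by apply: eq_big_nat => l Hl; rewrite pi_coefS; [ring|lia|lia].
have price_i1 : plan_price t i.+1 = P + Q by rewrite /plan_price big_nat_recr.
have cov_i : ending + passing = 1.
  have Hi' : (1 <= i <= n)%N by lia.
  have lt_in2 : (i < n.+2)%N by lia.
  rewrite -(cov1 i Hi') -big_split.
  by apply: eq_big_nat => k Hk; rewrite [in RHS](big_ltn lt_in2).
have cov_i1 : passing + starting = 1.
  have Hi1 : (1 <= i.+1 <= n)%N by lia.
  by rewrite -(cov1 i.+1 Hi1) [RHS]big_nat_recr.
have Q_ge : - d i.+1 * starting <= Q.
  rewrite /Q /starting mulr_sumr; apply: ler_sum_nat => l Hl.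
  by rewrite ler_wpM2r ?pi_coef_ge ?t_ge0 //; lia.
have ending_ge0 : 0 <= ending.
  by rewrite /ending big_nat_cond sumr_ge0 // => k /andP[Hk _]; apply: t_ge0; lia.
have key : ending * (d i.+1 - d i - c i.+1) <= 0.
  by rewrite mulr_ge0_le0 // subr_le0 d_step.
have -> : plan_price t i - plan_price t i.+1 =
    c i.+1 + ending * (d i.+1 - d i - c i.+1) + (- d i.+1 * starting - Q).
  have Ep : passing = 1 - ending by lra.
  have Es : starting = ending by lra.
  by rewrite price_i price_i1 Ep Es; ring.
lra.
Qed.

Lemma dual_feasible_plan_price t : t_feasible n t -> dual_feasible (plan_price t).
Proof.
move=> t_feas; have [cov1 t_ge0] := t_feas.
have cov1' i : (1 <= i <= n)%N -> coverage n t i = 1 by exact: cov1.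
split=> [i Hi | i Hi | ]; last 1 first.
- have := @plan_sum_le _ n t n (pi n) (fun=> C) t_ge0 (leqnn n) pi_coef_le_C.
  by rewrite sum_scale_coverage cov1' ?mulr1 //; lia.
- have := @plan_sum_le _ n t i (fun=> - d i) (pi i) t_ge0 ltac:(lia) (fun l => pi_coef_ge i l Hi).
  by rewrite sum_scale_coverage cov1' ?mulr1.
- exact: plan_price_step.
Qed.

(** * The greedy solution of the inner program *)

Section Greedy.
Variables (s u : nat -> R).

Definition excess i := u i - s i.

(* Stock [w j] entering period j: a positive balance [w j + excess j] is carried
   over, a deficit is booked in [v j] and the stock restarts from 0. *)
Fixpoint greedy_w j : R :=
  if j is j'.+1 then (if j' == 0%N then 0 else Num.max (greedy_w j' + excess j') 0) else 0.

Definition greedy_v i := Num.max (- (greedy_w i + excess i)) 0.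

Definition gain i l := pi i l * excess i.

Definition period_cost i := c_ext i.+1 * greedy_w i.+1 + d i * greedy_v i.

Definition run_cost k j := \sum_(k <= m < j.+1) excess m * \sum_(m.+1 <= q < j.+1) c_ext q.

Lemma greedy_wS j : (1 <= j)%N -> greedy_w j.+1 = Num.max (greedy_w j + excess j) 0.
Proof. by case: j. Qed.

Lemma greedy_w_ge0 j : 0 <= greedy_w j.
Proof. by case: j => [|[|j]] //=; rewrite le_max lexx orbT. Qed.

Lemma greedy_feasible : lp_feasible n s u greedy_w greedy_v.
Proof.
split=> //; split=> [i _|]; first exact: greedy_w_ge0.
split=> [i _|[|[|i]] Hi //]; first by rewrite /greedy_v le_max lexx orbT.
by rewrite greedy_wS // /greedy_v max_sub_max_opp /excess /=; ring.
Qed.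

Lemma run_costS k j : (k <= j.+1)%N ->
  run_cost k j.+1 = run_cost k j + c_ext j.+1 * \sum_(k <= m < j.+1) excess m.
Proof.
move=> Hk; rewrite /run_cost big_nat_recr //= (big_geq (leqnn j.+2)) mulr0 addr0.
rewrite mulr_sumr -big_split; apply: eq_big_nat => m Hm /=.
by rewrite big_nat_recr /=; [ring | lia].
Qed.

Lemma run_cost_nil j : run_cost j j = 0.
Proof. by rewrite /run_cost big_nat1 big_geq // mulr0. Qed.

Lemma block_weight_gain k j : (j <= n)%N ->
  block_weight n gain k j = run_cost k j - d j * \sum_(k <= m < j.+1) excess m.
Proof.
move=> Hj; rewrite /block_weight (minn_idPl Hj) /run_cost mulr_sumr -sumrB.
by apply: eq_bigr => m _; rewrite /gain pi_coef_le_n //; ring.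
Qed.

Lemma block_weight_gain_last k : (k <= n.+1)%N ->
  block_weight n gain k n.+1 = run_cost k n.+1.
Proof.
move=> Hk; rewrite /block_weight /run_cost (minn_idPr (leqnSn n)).
rewrite [RHS]big_nat_recr //= (big_geq (leqnn n.+2)) mulr0 addr0.
by apply: eq_big_nat => m Hm; rewrite /gain pi_coef_last 1?mulrC //; lia.
Qed.

Lemma greedy_step_pos j : (1 <= j)%N -> 0 < greedy_w j + excess j ->
  greedy_w j.+1 = greedy_w j + excess j /\ greedy_v j = 0.
Proof.
move=> Hj pos; rewrite greedy_wS // /greedy_v !maxEle.
by split; case: ifP => //; lra.
Qed.

Lemma greedy_step_npos j : (1 <= j)%N -> greedy_w j + excess j <= 0 ->
  greedy_w j.+1 = 0 /\ greedy_v j = - (greedy_w j + excess j).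
Proof.
move=> Hj npos; rewrite greedy_wS // /greedy_v !maxEle.
by split; case: ifP => //; lra.
Qed.

(* Before period j the current run started at k, right after the last reset:
   the costs of earlier periods are paid by a cover of {1, ..., k - 1}, and a
   run closed by a reset at j is a block [k, j] with label j. *)
Definition greedy_inv j k :=
  [/\ (1 <= k <= j)%N,
      \sum_(1 <= i < k) period_cost i <= dp n gain k.-1,
      greedy_w j = \sum_(k <= m < j) excess m
    & \sum_(k <= i < j) period_cost i = run_cost k j].

Lemma greedy_inv_pos j k : greedy_inv j k -> 0 < greedy_w j + excess j ->
  greedy_inv j.+1 k.
Proof.
case=> Hk prefix w_run cost_run pos.
have [w_next v_j] := greedy_step_pos j ltac:(lia) pos.
have run_next : greedy_w j.+1 = \sum_(k <= m < j.+1) excess m.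
  by rewrite w_next w_run big_nat_recr //=; lia.
split=> //; first lia.
rewrite big_nat_recr /=; last lia.
rewrite cost_run run_costS; last lia.
by rewrite /period_cost v_j run_next mulr0 addr0.
Qed.

Lemma greedy_inv_npos j k : (j <= n)%N -> greedy_inv j k ->
  greedy_w j + excess j <= 0 -> greedy_inv j.+1 j.+1.
Proof.
move=> Hjn [Hk prefix w_run cost_run] npos.
have [w_next v_j] := greedy_step_npos j ltac:(lia) npos.
split; [lia | | by rewrite w_next big_geq | by rewrite big_geq // run_cost_nil].
have -> : \sum_(1 <= i < j.+1) period_cost i =
    \sum_(1 <= i < k) period_cost i + \sum_(k <= i < j) period_cost i + period_cost j.
  by rewrite (@big_cat_nat _ _ _ k 1 j.+1) ?big_nat_recr /= ?addrA //; lia.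
have cost_j : period_cost j = - d j * \sum_(k <= m < j.+1) excess m.
  by rewrite /period_cost w_next v_j w_run big_nat_recr /=; [ring | lia].
have := @block_weight_le_dp _ n gain k j j ltac:(lia) (minn_idPl Hjn) ltac:(lia).
rewrite block_weight_gain // cost_run cost_j; lra.
Qed.

Lemma greedy_inv_exists j : (1 <= j <= n.+1)%N -> exists k, greedy_inv j k.
Proof.
elim: j => [|j IH] Hj; first lia.
case: (posnP j) => [->|Hj0].
  by exists 1%N; split; rewrite ?big_geq ?run_cost_nil.
have [k inv_k] := IH ltac:(lia).
case: (ltrP 0 (greedy_w j + excess j)) => sign.
  by exists k; apply: greedy_inv_pos.
by exists j.+1; apply: (@greedy_inv_npos j k) => //; lia.
Qed.

Lemma lp_obj_greedy_le_dp : lp_obj n c d C greedy_w greedy_v <= dp n gain n.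
Proof.
have [k [Hk prefix _ cost_run]] : exists k, greedy_inv n.+1 k.
  by apply: greedy_inv_exists; lia.
have -> : lp_obj n c d C greedy_w greedy_v = \sum_(1 <= i < n.+1) period_cost i.
  exact: lp_obj_shift.
case: (eqVneq k n.+1) => [Ek | Hkn]; first by move: prefix; rewrite Ek.
rewrite (@big_cat_nat _ _ _ k 1 n.+1) /= ?cost_run -?block_weight_gain_last; try lia.
have := @block_weight_le_dp _ n gain k n.+1 n ltac:(lia) (minn_idPr (leqnSn n)) (leqnn _).
lra.
Qed.

End Greedy.

Section Omega.
Local Open Scope classical_set_scope.
Variables (uL uU uh : nat -> R) (p rho : R) (s : nat -> R).
Hypothesis box_ok : forall i, (1 <= i <= n)%N -> 0 <= uL i /\ uL i < uU i.
Hypothesis rho_ge0 : 0 <= rho.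

Local Notation z := (z_coef n c d C uL uU uh p rho s).
Local Notation f := (f_val n c d C s).
Local Notation penalty i x := (rho * (`|x - uh i| `^ p)).

Definition box_values i l :=
  [set pi i l * x - penalty i x | x in [set x | uL i <= x <= uU i]].

Lemma box_values_has_sup i l : (1 <= i <= n)%N -> has_sup (box_values i l).
Proof.
move=> Hi; have [uL_ge0 uL_lt] := box_ok i Hi; split.
  by exists (pi i l * uL i - penalty i (uL i)), (uL i); rewrite //= lexx ltW.
exists (`|pi i l| * uU i) => _ [x /andP[Lx xU] <-].
have : 0 <= penalty i x by rewrite mulr_ge0 ?powR_ge0.
have : pi i l * x <= `|pi i l| * uU i.
  apply: le_trans (ler_norm _) _; rewrite normrM (ger0_norm (le_trans uL_ge0 Lx)).
  by rewrite ler_wpM2l.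
lra.
Qed.

Lemma z_coef_ge i l x : (1 <= i <= n)%N -> uL i <= x <= uU i ->
  pi i l * (x - s i) - penalty i x <= z i l.
Proof.
move=> Hi Hx; rewrite /z_coef.
have : pi i l * x - penalty i x <= sup (box_values i l).
  by apply: ub_le_sup; [exact: (box_values_has_sup i l Hi).2 | exists x].
lra.
Qed.

Lemma z_coef_approx i l (e : R) : (1 <= i <= n)%N -> 0 < e ->
  exists2 x, uL i <= x <= uU i & z i l - e < pi i l * (x - s i) - penalty i x.
Proof.
move=> Hi e_gt0.
have [_ [x Hx <-] near] := sup_adherent e_gt0 (box_values_has_sup i l Hi).
by exists x => //; move: near; rewrite /z_coef; lra.
Qed.

Lemma lp_obj_ge0 u w v : lp_feasible n s u w v -> 0 <= lp_obj n c d C w v.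
Proof.
case=> [_ [w_ge0 [v_ge0 _]]]; rewrite addr_ge0 ?mulr_ge0 ?w_ge0 //; last lia.
rewrite big_nat_cond sumr_ge0 // => i /andP[Hi _]; have [c_ge0 d_ge0] := cd_ge0 i Hi.
by rewrite addr_ge0 // mulr_ge0 ?w_ge0 ?v_ge0 //; lia.
Qed.

Lemma f_val_le_lp_obj u w v : lp_feasible n s u w v -> f u <= lp_obj n c d C w v.
Proof.
move=> feas; apply: ge_inf; last by exists w, v.
by exists 0 => _ [w' [v' [feas' ->]]]; exact: lp_obj_ge0 feas'.
Qed.

Lemma f_val_ge_dual u y : dual_feasible y ->
  \sum_(1 <= i < n.+1) y i * (u i - s i) <= f u.
Proof.
move=> y_dual; apply: lb_le_inf.
  exists (lp_obj n c d C (greedy_w s u) (greedy_v s u)), (greedy_w s u), (greedy_v s u).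
  by split; first exact: greedy_feasible.
by move=> _ [w [v [feas ->]]]; exact: lp_obj_ge_dual feas y_dual.
Qed.

Lemma objective_le_dp u : in_box n uL uU u ->
  f u - rho * pnorm_pow n p u uh <= dp n z n.
Proof.
move=> u_box.
have f_le := @f_val_le_lp_obj u _ _ (greedy_feasible s u).
have greedy_le := lp_obj_greedy_le_dp s u.
have dp_le : dp n (gain s u) n - \sum_(1 <= i < n.+1) penalty i (u i) <= dp n z n.
  by apply: dp_sub_le => // i l Hi _; exact: (z_coef_ge _ _ _ Hi (u_box i Hi)).
rewrite /pnorm_pow mulr_sumr; lra.
Qed.

Lemma omega_le_dp : omega n c d C uL uU uh p rho s <= dp n z n.
Proof.
apply: ge_sup; last by move=> _ [u u_box <-]; exact: objective_le_dp.
exists (f uL - rho * pnorm_pow n p uL uh), uL => // i Hi.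
by have [_ /ltW ->] := box_ok i Hi; rewrite lexx.
Qed.

Lemma objective_le_omega u : in_box n uL uU u ->
  f u - rho * pnorm_pow n p u uh <= omega n c d C uL uU uh p rho s.
Proof.
move=> u_box; apply: ub_le_sup; last by exists u.
by exists (dp n z n) => _ [v v_box <-]; exact: objective_le_dp.
Qed.

Lemma near_maximizer (lab : nat -> nat) (e : R) : 0 < e -> exists2 u, in_box n uL uU u &
  forall i, (1 <= i <= n)%N -> z i (lab i) - e < pi i (lab i) * (u i - s i) - penalty i (u i).
Proof.
move=> e_gt0.
have pick i : exists x, (1 <= i <= n)%N ->
    uL i <= x <= uU i /\ z i (lab i) - e < pi i (lab i) * (x - s i) - penalty i x.
  case: (boolP (1 <= i <= n)%N) => Hi; last by exists 0.
  by have [x ? ?] := z_coef_approx i (lab i) e Hi e_gt0; exists x.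
have [u Hu] := choice pick.
by exists u => i Hi; case: (Hu i Hi).
Qed.

Lemma dp_le_omega : dp n z n <= omega n c d C uL uU uh p rho s.
Proof.
have [t [lab [t_ge0 cov_t lab_t obj_t]]] := dp_attained_by_plan z (leqnn n).
have cov1 i : (1 <= i <= n)%N -> coverage n t i = 1.
  by move=> Hi; rewrite cov_t //; case/andP: Hi => _ ->.
have labelled i h : (1 <= i <= n)%N ->
    \sum_(1 <= k < i.+1) \sum_(i <= l < n.+2) h l * t k l = h (lab i).
  by move=> Hi; apply: sum_labelled_plan (cov1 i Hi) _ => k l; apply: lab_t.
pose y i := pi i (lab i).
have y_dual : dual_feasible y.
  have price_y i : (1 <= i <= n)%N -> plan_price t i = y i by exact: labelled.
  have [y_ge y_step y_le] := dual_feasible_plan_price t (conj cov1 t_ge0).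
  split=> [i Hi | i Hi |]; first by rewrite -price_y // y_ge.
    by rewrite -!price_y ?y_step //; lia.
  by rewrite -price_y //; lia.
have dp_sum : dp n z n = \sum_(1 <= i < n.+1) z i (lab i).
  by rewrite -obj_t t_obj_by_item; apply: eq_big_nat => i Hi; exact: labelled.
apply/ler_addgt0Pr => e e_gt0.
have n_gt0 : 0 < n%:R :> R by rewrite ltr0n.
have [u u_box u_near] := near_maximizer lab (e / n%:R) (divr_gt0 e_gt0 n_gt0).
have e_split : e = \sum_(1 <= i < n.+1) e / n%:R.
  have n_neq0 : n%:R != 0 :> R by rewrite gt_eqF.
  by rewrite sumr_const_nat subn1 /=; field.
have : dp n z n - e <= \sum_(1 <= i < n.+1) y i * (u i - s i) - rho * pnorm_pow n p u uh.
  rewrite dp_sum e_split -sumrB /pnorm_pow mulr_sumr -sumrB.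
  by apply: ler_sum_nat => i Hi; exact: ltW (u_near i Hi).
have := f_val_ge_dual u y y_dual; have := objective_le_omega u u_box; lra.
Qed.

Lemma omega_eq_dp : omega n c d C uL uU uh p rho s = dp n z n.
Proof. by apply/le_anti; rewrite omega_le_dp dp_le_omega. Qed.

End Omega.

End Prices.
Arguments omega_eq_dp {R n C c d} n_ge1 cd_ge0 C_ge0 d_step {uL uU uh p rho s}.

Theorem proposition2 (R : realType) (n : nat) (T C p rho : R)
  (c d s uL uU uh : nat -> R) :
  (1 <= n)%N -> 0 < T ->
  (forall i, (1 <= i <= n)%N -> 0 <= c i /\ 0 <= d i) -> 0 <= C ->
  (forall i, (1 <= i < n)%N -> d i.+1 - d i <= c i.+1) ->
  (forall i, (1 <= i <= n)%N -> 0 <= uL i /\ uL i < uU i) ->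
  in_box n uL uU uh ->
  1 <= p -> 0 <= rho ->
  (forall i, (1 <= i <= n)%N -> 0 <= s i) ->
  \sum_(1 <= i < n.+1) s i <= T ->
  let z := z_coef n c d C uL uU uh p rho s in
  (exists t, t_feasible n t /\ t_obj n z t = omega n c d C uL uU uh p rho s) /\
  (forall t, t_feasible n t -> t_obj n z t <= omega n c d C uL uU uh p rho s).
Proof.
move=> n_ge1 _ cd_ge0 C_ge0 d_step box_ok _ _ rho_ge0 _ _ z.
rewrite (omega_eq_dp n_ge1 cd_ge0 C_ge0 d_step box_ok rho_ge0).
split; last by move=> t /t_obj_le_dp.
have [t [lab [t_ge0 cov_t _ obj_t]]] := dp_attained_by_plan z (leqnn n).
by exists t; split=> //; split=> // i Hi; move: (cov_t i Hi); case/andP: Hi => _ ->.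
Qed.
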